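(* Let $p^{\mathcal S}(c,x)$ and $p^{\mathcal T}(c,x)$ be the data distributions of the source and target tasks. Define $$D^{ST}_{\mathrm{trace}}=2\sup_{\theta\in\Theta}\bigl|\mathcal R^{\mathcal S}_{\theta}-\mathcal R^{\mathcal T}_{\theta}\bigr|,$$ $$D^{ST}_{\mathrm{TV}}=2\,\mathrm{TV}(p^{\mathcal T}_c,p^{\mathcal S}_c)+2\,\mathbb E_{c\sim p^{\mathcal S}_c}\bigl[\mathrm{TV}\bigl(p^{\mathcal T}(\cdot|c),p^{\mathcal S}(\cdot|c)\bigr)\bigr].$$ Then both $D^{ST}=D^{ST}_{\mathrm{trace}}$ and $D^{ST}=D^{ST}_{\mathrm{TV}}$ satisfy the dissimilarity inequality $$d^{\mathcal T}(\theta,\theta^{\mathcal T}_* )\le d^{\mathcal S}(\theta,\theta^{\mathcal S}_* )+D^{ST}\quad\text{for all }\theta\in\Theta,$$ i.e. the tasks are $D^{ST}$-dissimilar for either choice. Moreover, $D^{ST}_{\mathrm{trace}}\le D^{ST}_{\mathrm{TV}}$.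
   Context: Setting: $\mathcal X$ is a finite set of classical inputs, labels are $c\in\{0,1\}$. $\Theta$ is an arbitrary set of embedding parameters and, for each $\theta\in\Theta$ and $x\in\mathcal X$, $\rho_\theta(x)$ is a density matrix (positive semidefinite, unit trace) on $\mathbb C^n$. $\mathcal M$ is the set of binary POVMs $M=(M_0,M_1)$ with $M_0,M_1\succeq0$ and $M_0+M_1=I$. The loss is $\ell_{\theta,M}(c,x)=1-\mathrm{Tr}(M_c\rho_\theta(x))$. For a task $\mathcal A\in\{\mathcal S,\mathcal T\}$ with joint distribution $p^{\mathcal A}(c,x)$ on $\{0,1\}\times\mathcal X$ (label marginal $p^{\mathcal A}_c$, input marginal $p^{\mathcal A}(x)$, conditionals $p^{\mathcal A}(x|c)$), the expected risk is $\mathcal R^{\mathcal A}_{\theta,M}=\mathbb E_{p^{\mathcal A}(c,x)}[\ell_{\theta,M}(c,x)]$ and $\mathcal R^{\mathcal A}_\theta=\min_{M\in\mathcal M}\mathcal R^{\mathcal A}_{\theta,M}$. Assume $\theta^{\mathcal A}_*\in\arg\min_{\theta\in\Theta}\mathcal R^{\mathcal A}_\theta$ exists. The task-based distance is $d^{\mathcal A}(\theta,\theta')=|\mathcal R^{\mathcal A}_{\theta'}-\mathcal R^{\mathcal A}_\theta|$. $\mathrm{TV}(p,q)=\tfrac12\sum_x|p(x)-q(x)|$ is the total variation distance. *)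

From HB Require Import structures.
From mathcomp Require Import all_boot all_order all_algebra.
From mathcomp Require Import complex.
From mathcomp Require Import boolp classical_sets reals.
Set Implicit Arguments. Unset Strict Implicit. Unset Printing Implicit Defensive.
Import Order.TTheory GRing.Theory Num.Theory.
Local Open Scope ring_scope.
Local Open Scope classical_set_scope.

Section QuantumTasks.
Variable R : realType.
Variable n : nat.
Variable X : finType.

Definition adjmx (m k : nat) (A : 'M[R[i]]_(m, k)) : 'M[R[i]]_(k, m) :=
  (map_mx (@conjc R) A)^T.

(* positive semidefinite: v^* A v >= 0 (in the order of C, i.e. real and >= 0) *)
Definition psd (A : 'M[R[i]]_n) : Prop :=
  forall v : 'cV[R[i]]_n, 0 <= (adjmx v *m A *m v) 0 0.

Definition density (rho : 'M[R[i]]_n) : Prop := psd rho /\ \tr rho = 1.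

(* binary POVM M = (M false, M true) = (M_0, M_1) *)
Definition povm (M : bool -> 'M[R[i]]_n) : Prop :=
  psd (M false) /\ psd (M true) /\ M false + M true = 1%:M.

(* loss l_{theta,M}(c,x) = 1 - Tr(M_c rho_theta(x)) (the trace is real for PSD
   arguments; we take its real part) *)
Definition loss (rho : X -> 'M[R[i]]_n) (M : bool -> 'M[R[i]]_n) (c : bool) (x : X) : R :=
  1 - complex.Re (\tr (M c *m rho x)).

Definition is_dist (p : bool -> X -> R) : Prop :=
  (forall c x, 0 <= p c x) /\ \sum_(c : bool) \sum_(x : X) p c x = 1.

Definition riskM (p : bool -> X -> R) (rho : X -> 'M[R[i]]_n) (M : bool -> 'M[R[i]]_n) : R :=
  \sum_(c : bool) \sum_(x : X) p c x * loss rho M c x.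

(* R_theta = min over POVMs (written as the infimum, which is attained) *)
Definition risk (p : bool -> X -> R) (rho : X -> 'M[R[i]]_n) : R :=
  inf [set r | exists M, povm M /\ r = riskM p rho M].

(* label marginal and conditional p(x|c) = p(c,x)/p_c(c) (0 if p_c(c) = 0) *)
Definition marg (p : bool -> X -> R) (c : bool) : R := \sum_(x : X) p c x.
Definition cond (p : bool -> X -> R) (c : bool) (x : X) : R := p c x / marg p c.

Definition TV (T : finType) (f g : T -> R) : R := 2^-1 * \sum_(t : T) `|f t - g t|.

Definition task_dist {Theta : Type} (p : bool -> X -> R)
  (rho : Theta -> X -> 'M[R[i]]_n) (th th' : Theta) : R :=
  `|risk p (rho th') - risk p (rho th)|.

Definition D_trace {Theta : Type} (pS pT : bool -> X -> R)
  (rho : Theta -> X -> 'M[R[i]]_n) : R :=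
  2 * sup [set r | exists th : Theta, r = `|risk pS (rho th) - risk pT (rho th)|].

Definition D_TV (pS pT : bool -> X -> R) : R :=
  2 * TV (marg pT) (marg pS) +
  2 * \sum_(c : bool) marg pS c * TV (cond pT c) (cond pS c).

(* the tasks are D-dissimilar (thS, thT are the optimal parameters) *)
Definition dissimilar {Theta : Type} (pS pT : bool -> X -> R)
  (rho : Theta -> X -> 'M[R[i]]_n) (thS thT : Theta) (D : R) : Prop :=
  forall th : Theta, task_dist pT rho th thT <= task_dist pS rho th thS + D.

End QuantumTasks.

(* Both dissimilarity bounds reduce to one estimate: the optimal risks of the
   two tasks differ by at most D_TV / 2 at every parameter. For a fixed POVM the
   losses lie in [0, 1] (the POVM effects have traces against a density matrix
   that are nonnegative and sum to 1), and the difference of the expected losses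
   splits into a label term, bounded by the total variation of the label
   marginals, and a class-wise term, bounded by the total variation of the
   conditionals; taking infima over POVMs preserves the estimate. Given such a
   uniform bound on the risk gap, the dissimilarity inequality follows by
   comparing each task with the optimum of the other, and D_trace, twice the
   supremum of that gap, is at most D_TV. *)

From HB Require Import structures.
From mathcomp Require Import all_boot all_order all_algebra.
From mathcomp Require Import complex.
From mathcomp Require Import boolp classical_sets reals.
From mathcomp Require Import spectral sesquilinear.
From mathcomp Require Import ring lra.
Import Order.TTheory GRing.Theory Num.Theory.

Set Implicit Arguments.
Unset Strict Implicit.
Unset Printing Implicit Defensive.

Local Open Scope classical_set_scope.
Local Open Scope ring_scope.

Section TotalVariation.
Variables (R : realType) (T : finType).
Implicit Types f g w : T -> R.

Lemma TVC f g : TV f g = TV g f.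
Proof. by rewrite /TV; congr (_ * _); apply: eq_bigr => t _; rewrite distrC. Qed.

Lemma TV_ge0 f g : 0 <= TV f g.
Proof. by rewrite /TV mulr_ge0 ?invr_ge0 // sumr_ge0. Qed.

Lemma ler_dist_sum_weight_TV f g w :
  (forall t, 0 <= w t <= 1) -> \sum_t f t = \sum_t g t ->
  `|\sum_t f t * w t - \sum_t g t * w t| <= TV f g.
Proof.
move=> w01 fg; rewrite -sumrB.
(* f - g has total mass 0, so the weights may be recentred at 1/2 *)
have -> : \sum_t (f t * w t - g t * w t) = \sum_t (f t - g t) * (w t - 2^-1).
  under eq_bigr do rewrite -mulrBl.
  under [RHS]eq_bigr do rewrite mulrBr.
  by rewrite sumrB -mulr_suml sumrB fg subrr mul0r subr0.
apply: le_trans (ler_norm_sum _ _ _) _.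
rewrite /TV mulr_sumr; apply: ler_sum => t _.
rewrite normrM mulrC ler_wpM2r //.
by rewrite ler_norml; have := w01 t; lra.
Qed.

End TotalVariation.

Section ExpectedLoss.
Variables (R : realType) (X : finType).
Implicit Types (p pS pT : bool -> X -> R) (c : bool).

Definition cond_expect p c (l : X -> R) : R := \sum_x cond p c x * l x.

Definition expect p (l : bool -> X -> R) : R := \sum_c \sum_x p c x * l c x.

Lemma sum_cond p c : marg p c != 0 -> \sum_x cond p c x = 1.
Proof. by move=> m0; rewrite -mulr_suml divff. Qed.

Lemma marg_mul_cond_expect p c l :
  (forall x, 0 <= p c x) -> marg p c * cond_expect p c l = \sum_x p c x * l x.
Proof.
move=> p0; have [m0|m0] := eqVneq (marg p c) 0.
  have pc0 x : p c x = 0 by apply: (psumr_eq0P (P := predT)) => // y _.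
  by rewrite m0 mul0r; apply/esym/big1 => x _; rewrite pc0 mul0r.
rewrite mulr_sumr; apply: eq_bigr => x _.
by rewrite /cond mulrA [marg p c * _]mulrC divfK.
Qed.

Lemma cond_expect_ge0_le1 p c l :
  (forall x, 0 <= p c x) -> (forall x, 0 <= l x <= 1) ->
  0 <= cond_expect p c l <= 1.
Proof.
move=> p0 l01.
have m0 : 0 <= marg p c by apply: sumr_ge0.
have cond0 x : 0 <= cond p c x by apply: divr_ge0.
apply/andP; split.
  by apply: sumr_ge0 => x _; rewrite mulr_ge0 //; case/andP: (l01 x).
apply: le_trans (_ : \sum_x cond p c x <= 1).
  apply: ler_sum => x _; rewrite -[leRHS]mulr1 ler_wpM2l //.
  by case/andP: (l01 x).
by have [m00|/sum_cond ->] := eqVneq (marg p c) 0;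
  rewrite // -mulr_suml m00 invr0 mulr0.
Qed.

(* The expected loss given c under the target, or under the source when the
   class c has no target mass: any value in [0, 1] would do there. *)
Definition tcond_expect pS pT c (l : X -> R) : R :=
  if marg pT c == 0 then cond_expect pS c l else cond_expect pT c l.

Lemma ler_class_gap pS pT c (l : X -> R) :
  (forall x, 0 <= pS c x) -> (forall x, 0 <= pT c x) ->
  (forall x, 0 <= l x <= 1) ->
  `|\sum_x pS c x * l x - \sum_x pT c x * l x
      - (marg pS c - marg pT c) * tcond_expect pS pT c l|
    <= marg pS c * TV (cond pT c) (cond pS c).
Proof.
move=> pS0 pT0 l01.
have mS0 : 0 <= marg pS c by apply: sumr_ge0.
rewrite -(marg_mul_cond_expect _ pS0) -(marg_mul_cond_expect _ pT0).
rewrite /tcond_expect; case: eqP => [->|/eqP mT0].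
  by rewrite !mul0r !subr0 subrr normr0 mulr_ge0 ?TV_ge0.
set eS := cond_expect pS c l; set eT := cond_expect pT c l.
have -> : marg pS c * eS - marg pT c * eT - (marg pS c - marg pT c) * eT
          = marg pS c * (eS - eT) by ring.
rewrite normrM ger0_norm //.
have [->|mS00] := eqVneq (marg pS c) 0; first by rewrite !mul0r.
rewrite ler_wpM2l // TVC; apply: ler_dist_sum_weight_TV => //.
by rewrite !sum_cond.
Qed.

Lemma ler_dist_expect_D_TV pS pT l :
  is_dist pS -> is_dist pT -> (forall c x, 0 <= l c x <= 1) ->
  `|expect pS l - expect pT l| <= D_TV pS pT / 2.
Proof.
move=> [pS0 sS] [pT0 sT] l01.
have -> : D_TV pS pT / 2 = TV (marg pT) (marg pS)
    + \sum_c marg pS c * TV (cond pT c) (cond pS c).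
  by rewrite /D_TV -mulrDr mulrC mulKf ?pnatr_eq0.
pose w c := tcond_expect pS pT c (l c).
have -> : expect pS l - expect pT l =
    \sum_c (marg pS c - marg pT c) * w c
    + \sum_c (\sum_x pS c x * l c x - \sum_x pT c x * l c x
              - (marg pS c - marg pT c) * w c).
  rewrite /expect -big_split -sumrB.
  by apply: eq_bigr => c _; rewrite [RHS]addrC subrK.
apply: le_trans (ler_normD _ _) _; apply: lerD.
  rewrite TVC; under eq_bigr do rewrite mulrBl.
  rewrite sumrB; apply: ler_dist_sum_weight_TV; last by rewrite /marg sS sT.
  by move=> c; rewrite /w /tcond_expect; case: eqP => _;
    apply: cond_expect_ge0_le1.
apply: le_trans (ler_norm_sum _ _ _) _; apply: ler_sum => c _.
exact: ler_class_gap.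
Qed.

End ExpectedLoss.

Section PositiveSemidefinite.
Variables (R : realType) (n : nat).
Local Notation C := R[i].
Implicit Types (A B : 'M[C]_n) (u v : 'cV[C]_n).

Lemma adjmxD m k (A B : 'M[C]_(m, k)) : adjmx (A + B) = adjmx A + adjmx B.
Proof. by apply/matrixP => a b; rewrite !mxE rmorphD. Qed.

Lemma adjmxZ m k (a : C) (A : 'M[C]_(m, k)) : adjmx (a *: A) = a^* *: adjmx A.
Proof. by apply/matrixP => i j; rewrite !mxE rmorphM. Qed.

Lemma adjmxM m k l (A : 'M[C]_(m, k)) (B : 'M[C]_(k, l)) :
  adjmx (A *m B) = adjmx B *m adjmx A.
Proof.
apply/matrixP => a b; rewrite !mxE rmorph_sum; apply: eq_bigr => j _.
by rewrite !mxE rmorphM mulrC.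
Qed.

Lemma adjmxK m k (A : 'M[C]_(m, k)) : adjmx (adjmx A) = A.
Proof. by apply/matrixP => a b; rewrite !mxE /= conjcK. Qed.

Lemma adjmxE m k (A : 'M[C]_(m, k)) : adjmx A = (A ^t* )%sesqui.
Proof. by apply/matrixP => a b; rewrite !mxE. Qed.

Definition mxform A u v : C := (adjmx u *m A *m v) 0 0.

Lemma mxformDl A u1 u2 v : mxform A (u1 + u2) v = mxform A u1 v + mxform A u2 v.
Proof. by rewrite /mxform adjmxD !mulmxDl mxE. Qed.

Lemma mxformDr A u v1 v2 : mxform A u (v1 + v2) = mxform A u v1 + mxform A u v2.
Proof. by rewrite /mxform !mulmxDr mxE. Qed.

Lemma mxformZl A a u v : mxform A (a *: u) v = a^* * mxform A u v.
Proof. by rewrite /mxform adjmxZ -!scalemxAl mxE. Qed.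

Lemma mxformZr A a u v : mxform A u (a *: v) = a * mxform A u v.
Proof. by rewrite /mxform -!scalemxAr mxE. Qed.

Lemma mxformB A B u v : mxform (A - B) u v = mxform A u v - mxform B u v.
Proof. by rewrite /mxform mulmxBr mulmxBl !mxE. Qed.

Lemma mxform_adj A u v : mxform (adjmx A) u v = (mxform A v u)^*.
Proof.
have adj00 (M : 'M[C]_1) : (M 0 0)^* = adjmx M 0 0 by rewrite !mxE.
by rewrite /mxform adj00 !adjmxM adjmxK mulmxA.
Qed.

Lemma mxform_delta A i j : mxform A (delta_mx i 0) (delta_mx j 0) = A i j.
Proof.
rewrite /mxform; have -> : adjmx (delta_mx i 0 : 'cV[C]_n) = delta_mx 0 i.
  by apply/matrixP => a b; rewrite !mxE rmorph_nat andbC.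
by rewrite -rowE -colE !mxE.
Qed.

Lemma mxform_conj A P u v :
  mxform (P *m A *m adjmx P) u v = mxform A (adjmx P *m u) (adjmx P *m v).
Proof. by rewrite /mxform adjmxM adjmxK !mulmxA. Qed.

(* Polarization: the diagonal values at u + v and u + 'i v determine the form. *)
Lemma mxform_diag_eq0 A : (forall v, mxform A v v = 0) -> A = 0.
Proof.
move=> A0; apply/matrixP => i j; rewrite mxE -mxform_delta.
set u := delta_mx i 0; set v := delta_mx j 0.
have huv := A0 (u + v); rewrite mxformDl !mxformDr !A0 add0r addr0 in huv.
have hiv := A0 (u + 'i *: v).
rewrite mxformDl !mxformDr !mxformZl !mxformZr !A0 conjCi in hiv.
rewrite add0r !mulr0 addr0 mulNr -mulrBr in hiv.
move/eqP: hiv; rewrite mulf_eq0 (negbTE (neq0Ci _)) subr_eq0 => /eqP vu.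
by move/eqP: huv; rewrite -vu -mulr2n mulrn_eq0 => /eqP.
Qed.

Lemma psd_adjmx A : psd A -> adjmx A = A.
Proof.
move=> A_psd; apply/esym/eqP; rewrite -subr_eq0; apply/eqP/mxform_diag_eq0 => v.
by rewrite mxformB mxform_adj conj_Creal ?subrr // ger0_real // A_psd.
Qed.

(* With B = adjmx P *m diag_mx d *m P for a unitary P, Tr (A B) is the sum of
   the products (P A adjmx P)_ii * d_i, and both factors are diagonal entries of
   PSD matrices. *)
Lemma mxtrace_mul_psd_ge0 A B : psd A -> psd B -> 0 <= \tr (A *m B).
Proof.
move=> A_psd B_psd.
have /orthomx_spectralP : B \is normalmx.
  by apply/normalmxP; rewrite -adjmxE psd_adjmx.
set P := spectralmx B; set d := spectral_diag B => eB.
have P_unitary : P \is unitarymx by apply: spectral_unitarymx.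
have PP : P *m adjmx P = 1%:M by rewrite adjmxE; apply/unitarymxP.
rewrite invmx_unitary // -adjmxE in eB.
have psd_diag M i : psd M -> 0 <= (P *m M *m adjmx P) i i.
  by move=> M_psd; rewrite -mxform_delta mxform_conj; apply: M_psd.
have d0 i : 0 <= d 0 i.
  have -> : d 0 i = (P *m B *m adjmx P) i i.
    by rewrite eB !mulmxA PP mul1mx -mulmxA PP mulmx1 mxE eqxx mulr1n.
  exact: psd_diag.
rewrite eB mulmxA mxtrace_mulC !mulmxA mul_mx_diag /mxtrace.
by apply: sumr_ge0 => i _; rewrite mxE mulr_ge0 ?psd_diag.
Qed.

End PositiveSemidefinite.

Section Infimum.
Variables (R : realType) (T : Type) (P : T -> Prop).
Local Notation img f := [set r | exists t, P t /\ r = f t].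

Lemma inf_le_inf_add (f g : T -> R) b :
  (exists t, P t) -> has_lbound (img f) -> (forall t, P t -> f t <= g t + b) ->
  inf (img f) <= inf (img g) + b.
Proof.
move=> [t0 Pt0] f_lb fg; rewrite -lerBlDr; apply: lb_le_inf.
  by exists (g t0), t0.
move=> _ [t [Pt ->]]; rewrite lerBlDr.
by apply: le_trans (fg t Pt); apply: ge_inf f_lb _ _; exists t.
Qed.

Lemma ler_dist_inf (f g : T -> R) b :
  (exists t, P t) -> has_lbound (img f) -> has_lbound (img g) ->
  (forall t, P t -> `|f t - g t| <= b) ->
  `|inf (img f) - inf (img g)| <= b.
Proof.
move=> P0 f_lb g_lb fg.
have fg' t : P t -> f t <= g t + b by move=> /fg /ler_normlP[? ?]; lra.
have gf' t : P t -> g t <= f t + b by move=> /fg /ler_normlP[? ?]; lra.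
have := inf_le_inf_add P0 f_lb fg'; have := inf_le_inf_add P0 g_lb gf'.
by rewrite ler_norml; lra.
Qed.

End Infimum.

Section Excess.
Variables (R : realType) (T : Type).

Lemma excess_le_excess_add (f g : T -> R) t0 u0 D :
  (forall t, f t0 <= f t) -> (forall t, g u0 <= g t) ->
  (forall t, `|f t - g t| <= D / 2) ->
  forall t, `|g u0 - g t| <= `|f t0 - f t| + D.
Proof.
move=> f_min g_min fg t.
have ft : f t0 - f t <= 0 by rewrite subr_le0.
have gt : g u0 - g t <= 0 by rewrite subr_le0.
rewrite (ler0_norm ft) (ler0_norm gt).
have := f_min u0; have := fg t; have := fg u0.
by move=> /ler_normlP[? ?] /ler_normlP[? ?]; lra.
Qed.

End Excess.

Section Risk.
Variables (R : realType) (n : nat) (X : finType).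
Local Notation C := R[i].

Lemma loss_ge0_le1 (rho : X -> 'M[C]_n) M c x :
  density (rho x) -> povm M -> 0 <= loss rho M c x <= 1.
Proof.
move=> [rho_psd tr_rho] [M0_psd [M1_psd M_sum]].
have Re_ge0 b : 0 <= complex.Re (\tr (M b *m rho x)).
  have : 0 <= \tr (M b *m rho x) by apply: mxtrace_mul_psd_ge0; case: b.
  by rewrite lecE => /andP[].
have ReD (a b : C) : complex.Re (a + b) = complex.Re a + complex.Re b.
  by case: a; case: b.
have Re_sum : complex.Re (\tr (M false *m rho x))
              + complex.Re (\tr (M true *m rho x)) = 1.
  by rewrite -ReD -mxtraceD -mulmxDl M_sum mul1mx tr_rho.
by rewrite /loss; have := Re_ge0 false; have := Re_ge0 true; case: c; lra.
Qed.

Lemma povm_exists : exists M : bool -> 'M[C]_n, povm M.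
Proof.
exists (fun c => if c then 0 else 1%:M); split; last split.
- move=> v; rewrite mulmx1 mxE; apply: sumr_ge0 => i _.
  by rewrite !mxE mulrC mulcJ_ge0.
- by move=> v; rewrite mulmx0 mul0mx mxE.
- by rewrite addr0.
Qed.

Lemma ler_dist_risk_D_TV (rho : X -> 'M[C]_n) pS pT :
  (forall x, density (rho x)) -> is_dist pS -> is_dist pT ->
  `|risk pS rho - risk pT rho| <= D_TV pS pT / 2.
Proof.
move=> rho_density pS_dist pT_dist.
have loss01 M : povm M -> forall c x, 0 <= loss rho M c x <= 1.
  by move=> M_povm c x; apply: loss_ge0_le1.
have riskM_lb p : is_dist p ->
    has_lbound [set r | exists M, povm M /\ r = riskM p rho M].
  move=> [p0 _]; exists 0 => _ [M [M_povm ->]].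
  apply: sumr_ge0 => c _; apply: sumr_ge0 => x _.
  by rewrite mulr_ge0 //; case/andP: (loss01 M M_povm c x).
apply: (ler_dist_inf povm_exists (riskM_lb _ pS_dist) (riskM_lb _ pT_dist)).
by move=> M M_povm; apply: ler_dist_expect_D_TV => //; apply: loss01.
Qed.

End Risk.

Section Dissimilarity.
Variables (R : realType) (n : nat) (X : finType) (Theta : Type).
Variables (rho : Theta -> X -> 'M[R[i]]_n) (pS pT : bool -> X -> R).
Variables thS thT : Theta.
Local Notation gap th := `|risk pS (rho th) - risk pT (rho th)|.

Lemma dissimilar_of_risk_gap (D : R) :
  (forall th, risk pS (rho thS) <= risk pS (rho th)) ->
  (forall th, risk pT (rho thT) <= risk pT (rho th)) ->
  (forall th, gap th <= D / 2) -> dissimilar pS pT rho thS thT D.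
Proof.
move=> optS optT gapD th.
exact: (@excess_le_excess_add _ _ (fun th => risk pS (rho th))
          (fun th => risk pT (rho th)) _ _ _ optS optT gapD).
Qed.

Lemma D_trace_half :
  D_trace pS pT rho / 2 = sup [set r | exists th, r = gap th].
Proof. by rewrite /D_trace mulrC mulKf ?pnatr_eq0. Qed.

Lemma risk_gap_le_D_trace b :
  (forall th, gap th <= b) -> forall th, gap th <= D_trace pS pT rho / 2.
Proof.
move=> gap_b th; rewrite D_trace_half; apply: ub_le_sup; last by exists th.
by exists b => _ [th' ->].
Qed.

Lemma D_trace_le b : (forall th, gap th <= b) -> D_trace pS pT rho <= 2 * b.
Proof.
move=> gap_b; rewrite -[D_trace _ _ _](divfK (_ : 2 != 0)) ?pnatr_eq0 //.
rewrite mulrC ler_pM2l // D_trace_half.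
by apply: ge_sup; [exists (gap thS), thS | move=> _ [th ->]].
Qed.

End Dissimilarity.

Unset Implicit Arguments.

Theorem theorem3p1 (R : realType) (n : nat) (X : finType) (Theta : Type)
  (rho : Theta -> X -> 'M[R[i]]_n) (pS pT : bool -> X -> R) (thS thT : Theta) :
  (forall th x, density (rho th x)) ->
  is_dist pS -> is_dist pT ->
  (forall th, risk pS (rho thS) <= risk pS (rho th)) ->
  (forall th, risk pT (rho thT) <= risk pT (rho th)) ->
  [/\ dissimilar pS pT rho thS thT (D_trace pS pT rho),
      dissimilar pS pT rho thS thT (D_TV pS pT)
    & D_trace pS pT rho <= D_TV pS pT].
Proof.
move=> rho_density pS_dist pT_dist optS optT.
have gap_TV th : `|risk pS (rho th) - risk pT (rho th)| <= D_TV pS pT / 2.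
  exact: ler_dist_risk_D_TV.
split.
- apply: dissimilar_of_risk_gap optS optT _.
  exact: risk_gap_le_D_trace gap_TV.
- exact: dissimilar_of_risk_gap optS optT gap_TV.
- by rewrite -[D_TV _ _](divfK (_ : 2 != 0)) ?pnatr_eq0 // mulrC D_trace_le.
Qed.
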